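(* Let $G$ be a finite permutation group acting quasi-transitively on a finite set $\Omega$, with constant $t>1$, and suppose $G$ is not transitive on $\Omega$. Let $\Delta_1,\dots,\Delta_r$ ($r>1$) be the $G$-orbits on $\Omega$, fix $\alpha_i\in\Delta_i$ for each $i$, and put $d_i=|G_{\alpha_i}|/t$. Then $d_1\cdot|\Delta_1|=d_i\cdot|\Delta_i|$ for all $i=1,\dots,r$, and the orbit sizes $|\Delta_1|,\dots,|\Delta_r|$ are pairwise distinct.
   Context: A finite permutation group $G$ on a finite set $\Omega$ is called quasi-transitive if there is a natural number $t>1$ such that $|G_{\alpha\beta}|=t$ for all two-element subsets $\{\alpha,\beta\}\subseteq\Omega$, where $G_{\alpha\beta}$ denotes the pointwise stabiliser of $\alpha$ and $\beta$ in $G$, and $G_\alpha$ the stabiliser of $\alpha$. *)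

From HB Require Import structures.
From mathcomp Require Import all_boot all_fingroup.
Set Implicit Arguments. Unset Strict Implicit. Unset Printing Implicit Defensive.
Local Open Scope group_scope.

Definition quasi_transitive_with (T : finType) (G : {group {perm T}}) (t : nat) :=
  1 < t /\ forall a b : T, a != b -> #|'C_G([set a; b] | 'P)| = t.

From HB Require Import structures.
From mathcomp Require Import all_boot all_fingroup.
Set Implicit Arguments. Unset Strict Implicit. Unset Printing Implicit Defensive.

(* Fix a and write G_a for its stabiliser. For c <> a, the orbit-stabiliser
   theorem applied to G_a acting on c gives |G_a . c| = |G_a| / t =: d_a, so
   every G_a-orbit on Omega \ {a} has size d_a. Counting G along the orbit of a
   gives d_a |G . a| = |G| / t, which is the first claim. If G . a and G . b
   were distinct orbits of the same size, then d_a would divide both |G . b|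
   and |G . a| - 1 (both are unions of G_a-orbits avoiding a), hence d_a = 1;
   then G_a fixes every point, so G_a = 1, contradicting |G_a| = d_a t = t > 1. *)

Local Open Scope group_scope.
Local Open Scope nat_scope.

Lemma dvdn_card_uniform_orbits (T : finType) (H : {group {perm T}}) (S : {set T}) d :
  [acts H, on S | 'P] -> {in S, forall c, #|orbit 'P H c| = d} -> d %| #|S|.
Proof.
move=> actsS cardHS; rewrite -(acts_sum_card_orbit actsS); apply: dvdn_sum => X.
by case/imsetP=> c Sc ->; rewrite cardHS.
Qed.

Lemma perm_group_trivial_of_card_orbits1 (T : finType) (H : {group {perm T}}) :
  (forall c, #|orbit 'P H c| = 1) -> H :=: 1%g.
Proof.
move=> orbH1; apply/trivgP/subsetP=> g Hg; rewrite inE; apply/eqP/permP=> c.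
have /card_orbit1 orbHc := orbH1 c.
by have := mem_orbit 'P c Hg; rewrite orbHc inE perm1 => /eqP.
Qed.

Lemma exists_notin_orbit (T : finType) (G : {group {perm T}}) a :
  ~~ [transitive G, on [set: T] | 'P] -> exists c, c \notin orbit 'P G a.
Proof.
move=> ntrG; apply/existsP; apply: contraR ntrG; rewrite negb_exists => /forallP Ga.
by apply/imsetP; exists a => //; apply/setP=> x; rewrite inE; have:= Ga x; rewrite negbK.
Qed.

Section QuasiTransitive.

Variables (T : finType) (G : {group {perm T}}) (t : nat).
Hypothesis qtG : quasi_transitive_with G t.

Let t_gt1 : 1 < t. Proof. by case: qtG. Qed.

Lemma card_stab_orbit_mul a c :
  a != c -> #|orbit 'P 'C_G[a | 'P] c| * t = #|'C_G[a | 'P]|.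
Proof.
move=> neq_ac; case: qtG => _ /(_ a c neq_ac) <-.
suff -> : 'C_G([set a; c] | 'P) = 'C_('C_G[a | 'P])[c | 'P] by rewrite card_orbit_stab.
by rewrite -setIA -astabU.
Qed.

Lemma dvdn_quasi_transitive_stab a c : a != c -> t %| #|'C_G[a | 'P]|.
Proof. by move/card_stab_orbit_mul <-; apply: dvdn_mull. Qed.

Lemma card_stab_orbit a c :
  a != c -> #|orbit 'P 'C_G[a | 'P] c| = #|'C_G[a | 'P]| %/ t.
Proof. by move=> neq_ac; rewrite -(card_stab_orbit_mul neq_ac) mulnK // ltnW. Qed.

Lemma stab_index_mul_card_orbit a c : c \notin orbit 'P G a ->
  #|'C_G[a | 'P]| %/ t * #|orbit 'P G a| = #|G| %/ t.
Proof.
move=> Gac; have neq_ac : a != c by apply: contraNneq Gac => <-; apply: orbit_refl.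
by rewrite divn_mulAC ?(dvdn_quasi_transitive_stab neq_ac) // mulnC card_orbit_stab.
Qed.

Lemma card_orbit_neq a b :
  b \notin orbit 'P G a -> #|orbit 'P G a| != #|orbit 'P G b|.
Proof.
move=> Gab; apply/eqP=> eq_card.
have Gba : a \notin orbit 'P G b by rewrite orbit_sym.
set Ga := 'C_G[a | 'P]; set d := #|Ga| %/ t.
have actsGa (c : T) : [acts Ga, on orbit 'P G c | 'P].
  by apply: subset_trans (subsetIl _ _) (acts_orbit _ _ (subsetT _)).
have d_dvd_b : d %| #|orbit 'P G b|.
  apply: (dvdn_card_uniform_orbits (actsGa b)) => c Gbc.
  by apply: card_stab_orbit; apply: contraNneq Gba => ->.
have d_dvd_a : d %| #|orbit 'P G a :\ a|.
  apply: dvdn_card_uniform_orbits => [|c]; last first.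
    by rewrite !inE => /andP[neq_ca _]; apply: card_stab_orbit; rewrite eq_sym.
  by apply: actsD (actsGa a) _; rewrite astabs_set1 subsetIr.
have d1 : d = 1.
  apply/eqP; rewrite -dvdn1; move: (dvdn_sub d_dvd_b d_dvd_a).
  by rewrite -eq_card (cardsD1 a) orbit_refl add1n subSnn.
have Ga1 : Ga :=: 1%g.
  apply: perm_group_trivial_of_card_orbits1 => c; have [<-|neq_ac] := eqVneq a c.
    by rewrite (orbit1P _) ?cards1 //; apply/afixP=> g /setIP[_ /astab1P].
  by rewrite card_stab_orbit.
have neq_ab : a != b by apply: contraNneq Gab => ->; apply: orbit_refl.
have := card_stab_orbit_mul neq_ab; rewrite card_stab_orbit // -/Ga -/d d1 mul1n Ga1 cards1.
by move=> t1; move: t_gt1; rewrite t1.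
Qed.

End QuasiTransitive.

Theorem mainTheorem2 (T : finType) (G : {group {perm T}}) (t : nat) :
  quasi_transitive_with G t ->
  ~~ [transitive G, on [set: T] | 'P] ->
  (forall a b : T,
      (#|'C_G[a | 'P]%g| %/ t) * #|orbit 'P G a| = (#|'C_G[b | 'P]%g| %/ t) * #|orbit 'P G b|)
  /\
  (forall a b : T, orbit 'P G a != orbit 'P G b -> #|orbit 'P G a| != #|orbit 'P G b|).
Proof.
move=> qtG ntrG; split=> a b.
  have [c Gac] := exists_notin_orbit a ntrG; have [e Gbe] := exists_notin_orbit b ntrG.
  by rewrite (stab_index_mul_card_orbit qtG Gac) (stab_index_mul_card_orbit qtG Gbe).
move=> neq_orb; apply: (card_orbit_neq qtG).
by apply: contra neq_orb => /orbit_eqP ->.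
Qed.
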